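(* Let $\varepsilon\in(0,1]$, $L\in[0,\infty)$, $q\in(1,\infty)$, $\alpha\in[0,\infty)\setminus\{1\}$, let $f\colon\mathbb R\to\mathbb R$ satisfy $|f(x)-f(y)|\le L|x-y|$ for all $x,y\in\mathbb R$, and let $a\in C(\mathbb R,\mathbb R)$ satisfy $a(x)=\max\{x,\alpha x\}$ for all $x\in\mathbb R$. Then there exists $\mathbf G\in\mathbf N$ such that (i) $\mathcal R_a(\mathbf G)\in C(\mathbb R,\mathbb R)$; (ii) $\mathcal H(\mathbf G)=1$; (iii) $|(\mathcal R_a(\mathbf G))(x)-(\mathcal R_a(\mathbf G))(y)|\le L|x-y|$ for all $x,y\in\mathbb R$; (iv) $|(\mathcal R_a(\mathbf G))(x)-f(x)|\le\varepsilon\max\{1,|x|^q\}$ for all $x\in\mathbb R$; (v) $\mathbb D_1(\mathbf G)\le4(\max\{1,2L\})^{q/(q-1)}\varepsilon^{-q/(q-1)}+2$; and (vi) $\mathcal P(\mathbf G)=3\mathbb D_1(\mathbf G)+1\le24(\max\{1,2L\})^{q/(q-1)}\varepsilon^{-q/(q-1)}$.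
   Context: Artificial neural networks (ANNs). Let $\mathbb N=\{1,2,\dots\}$ and $\mathbf N=\bigcup_{L\in\mathbb N}\bigcup_{l_0,\dots,l_L\in\mathbb N}\prod_{k=1}^L(\mathbb R^{l_k\times l_{k-1}}\times\mathbb R^{l_k})$. For $\Phi=((W_1,B_1),\dots,(W_L,B_L))$ in the $(l_0,\dots,l_L)$ component, $\mathcal P(\Phi)=\sum_{k=1}^Ll_k(l_{k-1}+1)$, $\mathcal H(\Phi)=L-1$, $\mathbb D_1(\Phi)=l_1$. For $a\in C(\mathbb R,\mathbb R)$ the realization $\mathcal R_a(\Phi)\colon\mathbb R^{l_0}\to\mathbb R^{l_L}$ is $(\mathcal R_a(\Phi))(x_0)=W_Lx_{L-1}+B_L$ with $x_k=\mathfrak M_{a,l_k}(W_kx_{k-1}+B_k)$, $k=1,\dots,L-1$, where $\mathfrak M_{a,m}$ applies $a$ componentwise. *)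

From HB Require Import structures.
From mathcomp Require Import all_boot all_order all_algebra.
From mathcomp Require Import all_classical all_reals all_analysis.
Set Implicit Arguments. Unset Strict Implicit. Unset Printing Implicit Defensive.
Import Order.TTheory GRing.Theory Num.Theory.
Local Open Scope ring_scope.

(* An ANN ((W_1,B_1),...,(W_L,B_L)) with input dim l0 and output dim lL.
   [ann_last W B] is the last (affine, no activation) layer,
   [ann_cons W B G] prepends a layer followed by the activation. *)
Inductive ann (R : Type) : nat -> nat -> Type :=
| ann_last : forall l0 l1 : nat, 'M[R]_(l1, l0) -> 'M[R]_(l1, 1) -> ann R l0 l1
| ann_cons : forall l0 l1 lL : nat, 'M[R]_(l1, l0) -> 'M[R]_(l1, 1) ->
    ann R l1 lL -> ann R l0 lL.

Fixpoint ann_wf (R : Type) l0 lL (G : ann R l0 lL) : bool :=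
  match G with
  | @ann_last _ l0 l1 _ _ => (0 < l0)%N && (0 < l1)%N
  | @ann_cons _ l0 _ _ _ _ G' => (0 < l0)%N && ann_wf G'
  end.

Fixpoint realization (R : pzRingType) (a : R -> R) l0 lL (G : ann R l0 lL)
  : 'cV[R]_l0 -> 'cV[R]_lL :=
  match G with
  | ann_last _ _ W B => fun x => W *m x + B
  | ann_cons _ _ _ W B G' => fun x => realization a G' (map_mx a (W *m x + B))
  end.

Definition realization1 (R : pzRingType) (a : R -> R) (G : ann R 1 1) (x : R) : R :=
  realization a G (const_mx x) ord0 ord0.

Fixpoint ann_params (R : Type) l0 lL (G : ann R l0 lL) : nat :=
  match G with
  | @ann_last _ l0 l1 _ _ => (l1 * (l0 + 1))%N
  | @ann_cons _ l0 l1 _ _ _ G' => (l1 * (l0 + 1) + ann_params G')%N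
  end.

Fixpoint ann_length (R : Type) l0 lL (G : ann R l0 lL) : nat :=
  match G with
  | ann_last _ _ _ _ => 1%N
  | ann_cons _ _ _ _ _ G' => (ann_length G').+1
  end.

Definition ann_hidden (R : Type) l0 lL (G : ann R l0 lL) : nat := (ann_length G).-1.

Definition ann_D1 (R : Type) l0 lL (G : ann R l0 lL) : nat :=
  match G with
  | @ann_last _ _ l1 _ _ => l1
  | @ann_cons _ _ l1 _ _ _ _ => l1
  end.

(* Take u = max(1, 2L) / (2 eps), mesh h = 1/u, r = u^(1/(q-1)) and the grid
   t_i = -r + i h, i <= n, with n h >= 2r.  The piecewise-linear interpolant of f
   on the grid, extended by constants, is L-Lipschitz and within L h <= eps of f
   on [t_0, t_n]; outside, its error is at most L |x| <= eps |x|^q, because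
   |x| >= r gives L <= eps u <= eps |x|^(q-1).
   Since a(y) - a(y - h) = min(1, alpha) h + |1 - alpha| min(h, max(0, y)), each
   hinge of the interpolant is a difference of two leaky-ReLU units (this is where
   alpha != 1 is used), and the constant terms go into the output bias.  The
   width 2n is controlled by n <= 2 r u + 1 = 2 u^(q/(q-1)) + 1. *)

From HB Require Import structures.
From mathcomp Require Import all_boot all_order all_algebra.
From mathcomp Require Import all_classical all_reals all_analysis.
From mathcomp Require Import ring lra zify.
Import Order.TTheory GRing.Theory Num.Theory numFieldNormedType.Exports.
Set Implicit Arguments. Unset Strict Implicit.
Local Open Scope ring_scope.

Ltac case_minmax := repeat match goal with
  | |- context [Num.max ?a ?b] => rewrite (maxEle a b); case: (leP a b) => ?
  | |- context [Num.min ?a ?b] => rewrite (minEle a b); case: (leP a b) => ?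
  end.

Lemma lipschitz_const_ge0 (R : numDomainType) (g : R -> R) (L : R) :
  (forall x y, `|g x - g y| <= L * `|x - y|) -> 0 <= L.
Proof. by move=> /(_ 1 0); rewrite subr0 normr1 mulr1; apply: le_trans. Qed.

Lemma lipschitz_continuous (R : realFieldType) (g : R -> R) (L : R) :
  (forall x y, `|g x - g y| <= L * `|x - y|) -> continuous g.
Proof.
move=> gL x; apply/cvgrPdist_lt => e e0.
have L0 := lipschitz_const_ge0 gL.
have eL : 0 < e / (L + 1) by rewrite divr_gt0 // ltr_wpDl.
apply/nbhs_ballP; exists (e / (L + 1)) => //= t; rewrite /ball /= => xt.
apply: le_lt_trans (gL x t) _.
move: xt; rewrite ltr_pdivlMr ?ltr_wpDl //; apply: le_lt_trans.
by rewrite mulrDr mulr1 mulrC lerDl.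
Qed.

Lemma lipschitz_chord_err (R : realFieldType) (g : R -> R) (L x0 h x : R) :
  (forall x y, `|g x - g y| <= L * `|x - y|) -> 0 < h -> x0 <= x <= x0 + h ->
  `|g x0 + (g (x0 + h) - g x0) / h * (x - x0) - g x| <= L * h.
Proof.
move=> gL h0 /andP[x0x xh]; have L0 := lipschitz_const_ge0 gL.
set lam := (x - x0) / h.
have lam0 : 0 <= lam by rewrite divr_ge0 ?subr_ge0 // ltW.
have lam1 : lam <= 1 by rewrite ler_pdivrMr // mul1r lerBlDl.
have -> : g x0 + (g (x0 + h) - g x0) / h * (x - x0) - g x =
    (1 - lam) * (g x0 - g x) + lam * (g (x0 + h) - g x).
  by rewrite /lam; field; exact: lt0r_neq0.
have := gL x0 x; rewrite [`|x0 - x|]distrC [`|x - x0|]ger0_norm ?subr_ge0 //.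
rewrite ler_norml => /andP[A1 A2].
have := gL (x0 + h) x; rewrite [`|x0 + h - x|]ger0_norm ?subr_ge0 //.
rewrite ler_norml => /andP[B1 B2].
have e1 : L * (x - x0) <= L * h by apply: ler_wpM2l; lra.
have e2 : L * (x0 + h - x) <= L * h by apply: ler_wpM2l; lra.
rewrite ler_norml; apply/andP; split; nra.
Qed.

Section Ramp.
Variable R : realDomainType.
Implicit Types h m x y z : R.

Definition ramp h y := Num.min h (Num.max 0 y).

Lemma ramp_le h y z : y <= z -> ramp h y <= ramp h z.
Proof. by rewrite /ramp => yz; case_minmax; lra. Qed.

Lemma ramp_eq0 h y : 0 <= h -> y <= 0 -> ramp h y = 0.
Proof. by rewrite /ramp => h0 y0; case_minmax; lra. Qed.

Lemma ramp_eqh h y : h <= y -> ramp h y = h.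
Proof. by rewrite /ramp => hy; case_minmax; lra. Qed.

Lemma ramp_id h y : 0 <= y <= h -> ramp h y = y.
Proof. by rewrite /ramp => /andP[y0 yh]; case_minmax; lra. Qed.

Lemma rampD m h z : 0 <= m -> 0 <= h ->
  ramp m z + ramp h (z - m) = ramp (m + h) z.
Proof. by rewrite /ramp => m0 h0; case_minmax; lra. Qed.

Lemma sum_ramp h x t0 n : 0 <= h ->
  \sum_(i < n) ramp h (x - (t0 + i%:R * h)) = ramp (n%:R * h) (x - t0).
Proof.
move=> h0; elim: n => [|n IH]; first by rewrite big_ord0 mul0r /ramp; case_minmax; lra.
rewrite big_ord_recr /= IH -natr1 mulrDl mul1r -rampD ?mulr_ge0 //.
by congr (_ + ramp _ _); ring.
Qed.

Lemma ramp_sub_le h y z : y <= z -> ramp h z - ramp h y <= z - y.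
Proof. by rewrite /ramp => yz; case_minmax; lra. Qed.

End Ramp.

Section Interpolation.
Variables (R : realFieldType) (f : R -> R) (L t0 h : R).
Hypothesis fL : forall x y, `|f x - f y| <= L * `|x - y|.
Hypothesis h_gt0 : 0 < h.

Definition grid (i : nat) : R := t0 + i%:R * h.

Definition interp (n : nat) (x : R) : R :=
  f t0 + \sum_(i < n) (f (grid i.+1) - f (grid i)) / h * ramp h (x - grid i).

Lemma grid0 : grid 0 = t0.
Proof. by rewrite /grid mul0r addr0. Qed.

Lemma gridS i : grid i.+1 = grid i + h.
Proof. by rewrite /grid -natr1 mulrDl mul1r addrA. Qed.

Lemma grid_ge i : t0 <= grid i.
Proof. by rewrite /grid lerDl mulr_ge0 // ltW. Qed.

Lemma interpS n x : interp n.+1 x =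
  interp n x + (f (grid n.+1) - f (grid n)) / h * ramp h (x - grid n).
Proof. by rewrite /interp big_ord_recr addrA. Qed.

Lemma interp_slope_le i : `|(f (grid i.+1) - f (grid i)) / h| <= L.
Proof.
rewrite normrM normfV (gtr0_norm h_gt0) ler_pdivrMr //.
by apply: le_trans (fL _ _) _; rewrite gridS addrAC subrr add0r gtr0_norm.
Qed.

Lemma interp_lipschitz n x y : `|interp n x - interp n y| <= L * `|x - y|.
Proof.
wlog xy : x y / x <= y.
  move=> hwlog; case: (leP x y) => [|/ltW] xy; first exact: hwlog.
  by rewrite distrC [`|x - y|]distrC; exact: hwlog.
rewrite distrC [`|x - y|]distrC [`|y - x|]ger0_norm ?subr_ge0 //.
rewrite /interp [f t0 + _]addrC addrKA -sumrB; apply: le_trans (ler_norm_sum _ _ _) _.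
have ramp_incr i : 0 <= ramp h (y - grid i) - ramp h (x - grid i).
  by rewrite subr_ge0 ramp_le // lerB.
apply: (@le_trans _ _ (\sum_(i < n) L * (ramp h (y - grid i) - ramp h (x - grid i)))).
  apply: ler_sum => i _; rewrite -mulrBr normrM [X in _ * X]ger0_norm //.
  exact: ler_wpM2r (interp_slope_le i).
rewrite -mulr_sumr sumrB /grid !sum_ramp ?(ltW h_gt0) //.
apply: ler_wpM2l; first exact: lipschitz_const_ge0 fL.
have := @ramp_sub_le _ (n%:R * h) (x - t0) (y - t0).
by rewrite lerD2r => /(_ xy); lra.
Qed.

Lemma interp_left n x : x <= t0 -> interp n x = f t0.
Proof.
move=> xt0; rewrite /interp big1 ?addr0 // => i _.
by rewrite ramp_eq0 ?mulr0 ?subr_le0 ?(le_trans xt0 (grid_ge i)) ?(ltW h_gt0).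
Qed.

Lemma interp_right n x : grid n <= x -> interp n x = f (grid n).
Proof.
elim: n => [|n IH] xn; first by rewrite /interp big_ord0 addr0 grid0.
have xn' : grid n <= x by apply: le_trans xn; rewrite gridS lerDl ltW.
rewrite interpS IH // ramp_eqh; last by rewrite lerBrDl -gridS.
by rewrite divfK ?gt_eqF // addrC subrK.
Qed.

Lemma interp_err n x : t0 <= x <= grid n -> `|interp n x - f x| <= L * h.
Proof.
have L0 := lipschitz_const_ge0 fL.
elim: n => [|n IH] /andP[t0x xn].
  have -> : x = t0 by apply/eqP; rewrite eq_le t0x -grid0 xn.
  by rewrite /interp big_ord0 addr0 subrr normr0 mulr_ge0 // ltW.
have [xgn | gnx] := leP x (grid n).
  rewrite interpS ramp_eq0 ?mulr0 ?addr0 ?subr_le0 ?(ltW h_gt0) //.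
  by apply: IH; rewrite t0x.
rewrite interpS (interp_right (ltW gnx)) ramp_id; last first.
  by rewrite subr_ge0 (ltW gnx) lerBlDl -gridS.
by rewrite gridS in xn *; apply: lipschitz_chord_err; rewrite // (ltW gnx).
Qed.

Lemma interp_err_weighted (eps : R) (w : R -> R) n : t0 <= 0 -> - t0 <= grid n ->
  L * h <= eps -> (forall z, - t0 <= z -> L * z <= eps * w z) ->
  forall x, `|interp n x - f x| <= eps * Num.max 1 (w `|x|).
Proof.
move=> t0_le0 t0_grid Lh tailL x.
have eps0 : 0 <= eps.
  by apply: le_trans Lh; rewrite mulr_ge0 ?(ltW h_gt0) ?(lipschitz_const_ge0 fL).
have tail y : `|y - x| <= `|x| -> - t0 <= `|x| ->
    `|f y - f x| <= eps * Num.max 1 (w `|x|).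
  move=> yx t0x; apply: le_trans (fL _ _) _.
  apply: le_trans (_ : eps * w `|x| <= _); last by rewrite ler_wpM2l // le_max lexx orbT.
  apply: le_trans (tailL _ t0x).
  by rewrite ler_wpM2l // (lipschitz_const_ge0 fL).
have [xt0 | t0x] := leP x t0.
  rewrite interp_left //; apply: tail; rewrite [`|x|]ler0_norm ?(le_trans xt0) //.
    by rewrite ger0_norm ?subr_ge0 //; lra.
  by rewrite lerN2.
have [gnx | xgn] := leP (grid n) x.
  have x0 : 0 <= x by lra.
  rewrite interp_right //; apply: tail; rewrite [`|x|]ger0_norm //; last by lra.
  by rewrite ler0_norm ?subr_le0 //; lra.
apply: le_trans (interp_err _) _; first by rewrite !ltW.
by apply: le_trans Lh _; rewrite -[leLHS]mulr1 ler_wpM2l // le_max lexx.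
Qed.

End Interpolation.

Lemma leaky_relu_decomp (R : realDomainType) (alpha y : R) :
  Num.max y (alpha * y) = Num.min 1 alpha * y + `|1 - alpha| * Num.max y 0.
Proof. by have [a1 | a1] := lerP alpha 1; case_minmax; nra. Qed.

Lemma leaky_relu_increment (R : realDomainType) (alpha : R) (a : R -> R) (h y : R) :
  (forall x, a x = Num.max x (alpha * x)) -> 0 <= h ->
  a y - a (y - h) = Num.min 1 alpha * h + `|1 - alpha| * ramp h y.
Proof.
move=> aE h0; rewrite !aE !leaky_relu_decomp.
have <- : Num.max y 0 - Num.max (y - h) 0 = ramp h y by rewrite /ramp; case_minmax; lra.
ring.
Qed.

Definition pair_net (R : pzRingType) (n : nat) (s t w : nat -> R) (b : R) : ann R 1 1 :=
  ann_cons (const_mx 1) (col_mx (\col_(i < n) - s i) (\col_(i < n) - t i))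
    (ann_last (row_mx (\row_(i < n) w i) (\row_(i < n) - w i)) (const_mx b)).

Lemma realization_pair_net (R : pzRingType) (a : R -> R) n s t w b x :
  realization1 a (pair_net n s t w b) x =
  \sum_(i < n) (w i * a (x - s i) - w i * a (x - t i)) + b.
Proof.
rewrite /realization1 /= mxE [const_mx b _ _]mxE; congr (_ + _).
rewrite mxE big_split_ord /= -big_split /=; apply: eq_bigr => i _.
rewrite row_mxEl row_mxEr !mxE.
rewrite (unsplitK (inl _ i) : fintype.split (lshift n i) = inl i).
rewrite (unsplitK (inr _ i) : fintype.split (rshift n i) = inr i).
by rewrite !big_ord1 !mxE mul1r mulNr.
Qed.

Lemma pair_net_params (R : pzRingType) n (s t w : nat -> R) b :
  ann_params (pair_net n s t w b) = (3 * ann_D1 (pair_net n s t w b) + 1)%N.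
Proof. by rewrite /=; lia. Qed.

Section InterpNet.
Variables (R : realFieldType) (alpha : R) (f : R -> R) (t0 h : R).

Definition interp_net (n : nat) : ann R 1 1 :=
  pair_net n (grid t0 h) (fun i => grid t0 h i.+1)
    (fun i => (f (grid t0 h i.+1) - f (grid t0 h i)) / (h * `|1 - alpha|))
    (f t0 - \sum_(i < n)
       (f (grid t0 h i.+1) - f (grid t0 h i)) * Num.min 1 alpha / `|1 - alpha|).

Lemma realization_interp_net (a : R -> R) n :
  (forall x, a x = Num.max x (alpha * x)) -> alpha != 1 -> 0 < h ->
  realization1 a (interp_net n) = interp f t0 h n.
Proof.
move=> aE alpha1 h0; apply: funext => x; rewrite realization_pair_net /interp.
have d0 : `|1 - alpha| != 0 by rewrite normr_eq0 subr_eq0 eq_sym.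
pose D i := f (grid t0 h i.+1) - f (grid t0 h i).
have hinge i : D i / (h * `|1 - alpha|) * a (x - grid t0 h i)
    - D i / (h * `|1 - alpha|) * a (x - grid t0 h i.+1)
    = D i * Num.min 1 alpha / `|1 - alpha| + D i / h * ramp h (x - grid t0 h i).
  have -> : x - grid t0 h i.+1 = x - grid t0 h i - h by rewrite gridS opprD addrA.
  rewrite -mulrBr (leaky_relu_increment _ aE (ltW h0)).
  by field; rewrite d0 gt_eqF.
under eq_bigr => i _ do rewrite hinge.
by rewrite big_split /=; ring.
Qed.

End InterpNet.

Section RealPowers.
Variable R : realType.
Implicit Types L e u q z K p : R.

Lemma linear_le_powR_tail L e u q z : 0 < u -> 1 < q -> 0 <= e -> L <= e * u ->
  u `^ (q - 1)^-1 <= z -> L * z <= e * z `^ q.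
Proof.
move=> u0 q1 e0 Leu uz.
have z0 : 0 < z by apply: lt_le_trans uz; rewrite powR_gt0.
have u_le : u <= z `^ (q - 1).
  have -> : u = (u `^ (q - 1)^-1) `^ (q - 1).
    by rewrite -powRrM mulVf ?powRr1 ?(ltW u0) // subr_eq0 gt_eqF.
  by apply: ge0_ler_powR; rewrite ?nnegrE ?powR_ge0 ?(ltW z0) ?subr_ge0 ?(ltW q1).
rewrite -(mulr_powRB1 (ltW z0) (lt_trans ltr01 q1)).
have ez : 0 <= e * z by rewrite mulr_ge0 // ltW.
have : e * z * u <= e * z * z `^ (q - 1) by rewrite ler_wpM2l.
nra.
Qed.

Lemma powR_inv_mul u q : 0 < u -> q != 1 ->
  u `^ (q - 1)^-1 * u = u `^ (q / (q - 1)).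
Proof.
move=> u0 q1; have q1' : q - 1 != 0 by rewrite subr_eq0.
have -> : q / (q - 1) = (q - 1)^-1 + 1 by field.
rewrite powRD; first by rewrite powRr1 // ltW.
by rewrite (gt_eqF u0) implybT.
Qed.

Lemma powR_div2_le K e p : 0 < K -> 0 < e -> 0 <= p ->
  (K / (2 * e)) `^ p <= K `^ p * e `^ (- p).
Proof.
move=> K0 e0 p0.
have -> : e `^ (- p) = e^-1 `^ p by rewrite -powR_inv1 ?(ltW e0) // -powRrM mulN1r.
rewrite -powRM ?(ltW K0) ?invr_ge0 ?(ltW e0) //.
have e2 : 0 < 2 * e by rewrite mulr_gt0.
apply: ge0_ler_powR; rewrite ?nnegrE ?mulr_ge0 ?divr_ge0 ?invr_ge0 ?(ltW K0) ?(ltW e0) ?(ltW e2) //.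
by rewrite ler_pM2l // lef_pV2 ?posrE //; lra.
Qed.

Lemma powR_scale_ge1 K e p : 1 <= K -> 0 < e -> e <= 1 -> 0 <= p ->
  1 <= K `^ p * e `^ (- p).
Proof.
move=> K1 e0 e1 p0; apply: mulr_ege1.
  by have := ler_powR K1 p0; rewrite powRr0.
rewrite powRN invf_ge1 ?powR_gt0 //.
apply: le_trans (ge0_ler_powR p0 _ _ e1) _; rewrite ?nnegrE ?(ltW e0) //.
by rewrite powR1.
Qed.

End RealPowers.

Lemma truncn_grid_cover (R : realType) (r u : R) : 0 <= r -> 0 < u ->
  let n := (Num.truncn (2 * r * u)).+1 in
  r <= grid (- r) u^-1 n /\ n%:R <= 2 * (r * u) + 1.
Proof.
move=> r0 u0 n.
have /andP[trunc_le trunc_gt] : (Num.truncn (2 * r * u))%:R <= 2 * r * u < n%:R.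
  by apply: truncn_itv; rewrite !mulr_ge0 // ltW.
split; last by rewrite /n -natr1 lerD2r mulrA.
have : 2 * r <= n%:R / u by rewrite ler_pdivlMr //; exact: ltW.
by rewrite /grid; lra.
Qed.

Lemma width_bounds (R : realType) (n : nat) (ru W : R) :
  n%:R <= 2 * ru + 1 -> ru <= W -> 1 <= W ->
  (n + n)%:R <= 4 * W + 2 /\ (3 * (n + n) + 1)%:R <= 24 * W.
Proof. by rewrite !(natrD, natrM) => *; split; lra. Qed.

Theorem mainTheorem17 (R : realType) (eps L q alpha : R) (f a : R -> R)
  (heps : 0 < eps) (heps1 : eps <= 1) (hL : 0 <= L) (hq : 1 < q)
  (halpha : 0 <= alpha) (halpha1 : alpha != 1)
  (hf : forall x y : R, `|f x - f y| <= L * `|x - y|)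
  (ha_cont : continuous a)
  (ha : forall x : R, a x = Num.max x (alpha * x)) :
  exists G : ann R 1 1,
    ann_wf G /\ 
        continuous (realization1 a G) /\
        ann_hidden G = 1%N /\
        (forall x y : R,
           `|realization1 a G x - realization1 a G y| <= L * `|x - y|) /\
        (forall x : R,
           `|realization1 a G x - f x| <= eps * Num.max 1 (`|x| `^ q)) /\
        (ann_D1 G)%:R <= 4 * (Num.max 1 (2 * L)) `^ (q / (q - 1))
                           * eps `^ (- (q / (q - 1))) + 2 /\
        ann_params G = (3 * ann_D1 G + 1)%N /\
        (3 * ann_D1 G + 1)%:R <= 24 * (Num.max 1 (2 * L)) `^ (q / (q - 1))
                                 * eps `^ (- (q / (q - 1))).
Proof.
set K := Num.max 1 (2 * L); set p := q / (q - 1).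
have K1 : 1 <= K by rewrite le_max lexx.
have K2 : 2 * L <= K by rewrite le_max lexx orbT.
set u := K / (2 * eps); set r := u `^ (q - 1)^-1; set n := (Num.truncn (2 * r * u)).+1.
have u0 : 0 < u by rewrite divr_gt0 //; lra.
have Leu : L <= eps * u.
  have -> : eps * u = K / 2 by rewrite /u; field; rewrite gt_eqF.
  lra.
have Lh : L * u^-1 <= eps by rewrite ler_pdivrMr.
have [r_grid n_le] := truncn_grid_cover (powR_ge0 u (q - 1)^-1) u0.
have p0 : 0 <= p by rewrite divr_ge0 //; lra.
have ru_W : r * u <= K `^ p * eps `^ (- p).
  by rewrite /r powR_inv_mul ?gt_eqF // powR_div2_le //; lra.
have [D1_le P_le] := width_bounds n_le ru_W (powR_scale_ge1 K1 heps heps1 p0).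
have h0 : 0 < u^-1 by rewrite invr_gt0.
have lip := interp_lipschitz (- r) hf h0 n.
exists (interp_net alpha f (- r) u^-1 n).
rewrite pair_net_params (realization_interp_net f (- r) n ha halpha1 h0).
split=> //; split; first exact: lipschitz_continuous lip.
split=> //; split; first exact: lip.
split; last by rewrite -!mulrA.
apply: (@interp_err_weighted _ _ _ _ _ hf h0 _ (fun z => z `^ q)).
- by rewrite oppr_le0 powR_ge0.
- by rewrite opprK.
- exact: Lh.
- by move=> z; rewrite opprK; exact: linear_le_powR_tail u0 hq (ltW heps) Leu.
Qed.
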